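(* Let $\mathfrak F$ be a saturated formation and $G=PT$, where $P$ is a normal $p$-subgroup of $G$ and $T\le G$. If $P\cap Z_{\mathfrak F}(T)$ is normal in $P$, then $P\cap Z_{\mathfrak F}(T)\le Z_{\mathfrak F}(G)$.
   Context: All groups are finite, $p$ a prime. For a class $\mathfrak F$, a chief factor $H/K$ of $G$ is $\mathfrak F$-central if $(H/K)\rtimes(G/C_G(H/K))\in\mathfrak F$; $Z_{\mathfrak F}(G)$ is the product of all normal subgroups $N$ of $G$ such that every chief factor of $G$ below $N$ is $\mathfrak F$-central in $G$. *)

From HB Require Import structures.
From mathcomp Require Import all_boot all_fingroup all_solvable.
From Stdlib Require Import ClassicalEpsilon.

Set Implicit Arguments.
Unset Strict Implicit.
Unset Printing Implicit Defensive.

Import GroupScope.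

Definition group_class := forall gT : finGroupType, {group gT} -> Prop.

Record formation (F : group_class) : Prop := Formation {
  formation_isog : forall (gT rT : finGroupType) (G : {group gT}) (H : {group rT}),
      G \isog H -> F gT G -> F rT H;
  formation_quo : forall (gT : finGroupType) (G N : {group gT}),
      N <| G -> F gT G -> F _ (G / N)%G;
  formation_subdirect : forall (gT : finGroupType) (G N1 N2 : {group gT}),
      N1 <| G -> N2 <| G -> F _ (G / N1)%G -> F _ (G / N2)%G ->
      F _ (G / (N1 :&: N2))%G
}.

Definition saturated_formation (F : group_class) : Prop :=
  formation F /\
  forall (gT : finGroupType) (G : {group gT}), F _ (G / 'Phi(G))%G -> F gT G.

Definition pbool (P : Prop) : bool :=
  if excluded_middle_informative P then true else false.

(* A chief factor U/V of G (mathcomp: chief_factor G V U) is F-central if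
   (U/V) ⋊ (G / C_G(U/V)) belongs to F.  The action of G on U/V is the
   conjugation action 'Q (= 'J / V) restricted to G and U/V; C_G(U/V) is the
   kernel 'C(U/V | .) of that action, and the semidirect product is the
   external one of gproduct.v (sdprod_by) for the induced faithful action of
   G / C_G(U/V) on U/V.  The action hypothesis [nUV] always holds for a chief
   factor (lemma chief_factor_acts below); the definition does not depend on
   the proof of it (proof irrelevance). *)
Definition Fcentral (F : group_class) (gT : finGroupType) (G V U : {group gT}) : Prop :=
  forall nUV : {acts G, on group (U / V) | 'Q},
    F _ [set: sdprod_by ((<[nUV]> %% [group of 'C((U / V)%g | <[nUV]>)])%gact)]%G.

Lemma chief_factor_acts (gT : finGroupType) (G V U : {group gT}) :
  chief_factor G V U -> {acts G, on group (U / V) | 'Q}.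
Proof.
case/andP=> /maxgroupP[/andP[_ nVG] _] /andP[_ nUG].
by split; [apply: actsQ | apply: quotientS; apply: subsetT].
Qed.

Definition Fhyper_sub (F : group_class) (gT : finGroupType) (G N : {group gT}) : Prop :=
  N <| G /\
  forall U V : {group gT}, chief_factor G V U -> U \subset N -> Fcentral F G V U.

Definition ZF (F : group_class) (gT : finGroupType) (G : {group gT}) : {set gT} :=
  << \bigcup_(N : {group gT} | pbool (Fhyper_sub F G N)) N >>.

(* Since Z_F(T) is itself F-hypercentral in T (F-hypercentral normal subgroups
   are closed under joins), it suffices to show that every G-chief factor U/V
   below Z := P :&: Z_F(T), which is normal in G = PT, is F-central in G.  As P is
   nilpotent, [U, P] <= V, so P centralises U/V.  Hence U/V is also a T-chief
   factor below Z_F(T), thus F-central in T, and since G = T C_G(U/V) the two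
   semidirect products (U/V) x| (T/C_T(U/V)) and (U/V) x| (G/C_G(U/V)) are
   isomorphic. *)

From HB Require Import structures.
From Stdlib Require Import ClassicalEpsilon.
From mathcomp Require Import all_boot all_fingroup all_solvable.

Set Implicit Arguments.
Unset Strict Implicit.
Unset Printing Implicit Defensive.

Import GroupScope.

Lemma chief_factorP (gT : finGroupType) (G V U : {group gT}) :
  chief_factor G V U ->
  [/\ V \subset U, G \subset 'N(V), U \subset G & G \subset 'N(U)].
Proof. by case/andP=> /maxgroupP[/andP[/andP[sVU _] nVG] _] /andP[sUG nUG]. Qed.

Section ChiefFactorAction.

Variables (gT : finGroupType) (G V U : {group gT}).
Variable nUV : {acts G, on group (U / V) | 'Q}.

Lemma astab_chief_factor : 'C((U / V)%g | <[nUV]>) = G :&: 'C(U / V | 'Q).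
Proof. by rewrite astab_actby setIid. Qed.

Lemma astab_chief_factor_sub : 'C((U / V)%g | <[nUV]>) \subset G.
Proof. by rewrite astab_chief_factor subsetIl. Qed.

Lemma norm_astab_chief_factor : G \subset 'N('C((U / V)%g | <[nUV]>)).
Proof.
apply: subset_trans (astab_norm _ _); rewrite astabs_actby setIid subsetI subxx /=.
by case: nUV.
Qed.

Lemma gacent_astab_chief_factor :
  'C_(|<[nUV]>)('C((U / V)%g | <[nUV]>)) = U / V.
Proof.
rewrite gacentE; last by rewrite astab_chief_factor subsetIl.
apply/setP=> x; rewrite inE; apply: andb_idr => Ux.
by apply/afixP=> a Ca; apply: astab_act Ca Ux.
Qed.

Lemma mem_astab_chief_factor g :
  chief_factor G V U -> g \in G ->
  (g \in 'C((U / V)%g | <[nUV]>)) = [forall u in U, [~ u, g] \in V].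
Proof.
case/chief_factorP=> _ nVG sUG _ Gg; have nVg := subsetP nVG g Gg.
rewrite astab_chief_factor inE Gg astabQR ?(subset_trans sUG) // inE nVg /=.
apply/idP/forall_inP=> [sUgV u Uu | UgV].
  by rewrite -groupV invg_comm (subsetP sUgV) ?mem_commg ?set11.
rewrite gen_subG; apply/subsetP=> _ /imset2P[x u /set1P -> Uu ->].
by rewrite -groupV invg_comm UgV.
Qed.

End ChiefFactorAction.

Lemma isog_sdprod_by (aT1 rT1 aT2 rT2 : finGroupType)
    (D1 : {group aT1}) (R1 : {group rT1}) (D2 : {group aT2}) (R2 : {group rT2})
    (to1 : groupAction D1 R1) (to2 : groupAction D2 R2)
    (fR : {morphism R1 >-> rT2}) (fD : {morphism D1 >-> aT2}) :
    'injm fR -> 'injm fD -> fR @* R1 = R2 -> fD @* D1 = D2 ->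
    {in R1 & D1, forall x a, fR (to1 x a) = to2 (fR x) (fD a)} ->
  [set: sdprod_by to1] \isog [set: sdprod_by to2].
Proof.
move=> injR injD imR imD fR_act.
have sR : R1 \subset fR @*^-1 R2 by rewrite -imR -sub_morphim_pre.
have sD : D1 \subset fD @*^-1 D2 by rewrite -imD -sub_morphim_pre.
pose fH := restrm sR (sdpair1 to2 \o fR).
pose fK := restrm sD (sdpair2 to2 \o fD).
have actf : {in R1 & D1, morph_act to1 'J fH fK}.
  move=> x a Rx Da /=; rewrite /fH /fK /restrm /= fR_act // sdpair_act //.
    by rewrite -imR mem_morphim.
  by rewrite -imD mem_morphim.
apply/isogP; exists (xsdprod_morphism actf).
  rewrite injm_xsdprodm; apply/and3P; split.
  - by rewrite ker_restrm ker_comp (trivgP (injm_sdpair1 to2)) -kerE (trivgP injR) subsetIr.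
  - by rewrite ker_restrm ker_comp (trivgP (injm_sdpair2 to2)) -kerE (trivgP injD) subsetIr.
  by rewrite !morphim_restrm !setIid !morphim_comp imR imD im_sdpair_TI.
by rewrite im_xsdprodm !morphim_restrm !setIid !morphim_comp imR imD im_sdpair.
Qed.

(* The hypotheses make [u V1 |-> u V2] an isomorphism U1/V1 ~ U2/V2 and
   [g C1 |-> g C2] an isomorphism G1/C1 ~ G2/C2 compatible with the actions. *)
Section FcentralTransfer.

Variables (gT : finGroupType) (G1 V1 U1 G2 V2 U2 : {group gT}).
Hypotheses (chiefU1 : chief_factor G1 V1 U1) (chiefU2 : chief_factor G2 V2 U2).
Hypotheses (sG12 : G1 \subset G2) (sU12 : U1 \subset U2) (sV12 : V1 \subset V2).
Hypotheses (tiU1V2 : U1 :&: V2 \subset V1) (sU2U1V2 : U2 \subset U1 * V2).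
Hypothesis sG2G1C : G2 \subset G1 * 'C(U2 / V2 | 'Q).
Variables (nU1 : {acts G1, on group (U1 / V1) | 'Q})
          (nU2 : {acts G2, on group (U2 / V2) | 'Q}).

Let C1 := 'C((U1 / V1)%g | <[nU1]>).
Let C2 := 'C((U2 / V2)%g | <[nU2]>).

Lemma astab_chief_factorS : C1 \subset C2.
Proof.
have [_ nVG2 _ _] := chief_factorP chiefU2.
apply/subsetP=> g C1g; have G1g := subsetP (astab_chief_factor_sub nU1) g C1g.
have G2g := subsetP sG12 g G1g.
rewrite mem_astab_chief_factor //.
apply/forall_inP=> _ /(subsetP sU2U1V2)/mulsgP[u v Uu Vv ->].
rewrite commMgJ groupM //.
  rewrite groupJ // (subsetP sV12) //.
  by move: C1g; rewrite mem_astab_chief_factor // => /forall_inP->.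
by rewrite commgEl groupM ?groupV // memJ_norm // (subsetP nVG2).
Qed.

Lemma astab_chief_factorI : G1 :&: C2 \subset C1.
Proof.
have [_ _ _ nUG1] := chief_factorP chiefU1.
apply/subsetP=> g /setIP[G1g C2g]; have G2g := subsetP sG12 g G1g.
rewrite mem_astab_chief_factor //; apply/forall_inP=> u Uu.
apply: (subsetP tiU1V2); rewrite inE commgEl groupM ?groupV ?memJ_norm ?(subsetP nUG1) //=.
by move: C2g; rewrite mem_astab_chief_factor // => /forall_inP->; rewrite ?(subsetP sU12).
Qed.

Lemma chief_factor_mulg_astab : G2 \subset G1 * C2.
Proof.
by rewrite /C2 astab_chief_factor setIC group_modl // subsetI sG2G1C subxx.
Qed.

Lemma isog_chief_factor_sdprod :
  [set: sdprod_by ((<[nU1]> %% [group of C1])%gact)] \isog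
  [set: sdprod_by ((<[nU2]> %% [group of C2])%gact)].
Proof.
have [sVU1 nVG1 sUG1 nUG1] := chief_factorP chiefU1.
have [sVU2 nVG2 sUG2 _] := chief_factorP chiefU2.
have nCG1 : G1 \subset 'N(C1) by apply: norm_astab_chief_factor.
have nCG2 : G2 \subset 'N(C2) by apply: norm_astab_chief_factor.
have nV2U1 : U1 \subset 'N(V2) by rewrite (subset_trans sU12) ?(subset_trans sUG2).
have nV1U1 : U1 \subset 'N(V1) by apply: subset_trans sUG1 nVG1.
have kerR : 'ker (coset V1) \subset 'ker (restrm nV2U1 (coset V2)).
  by rewrite ker_coset ker_restrm ker_coset subsetI sVU1 sV12.
have nC2G1 : G1 \subset 'N(C2) by apply: subset_trans sG12 nCG2.
have kerD : 'ker (coset C1) \subset 'ker (restrm nC2G1 (coset C2)).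
  by rewrite ker_coset ker_restrm ker_coset subsetI astab_chief_factor_sub astab_chief_factorS.
have sRU1 : 'C_(|<[nU1]>)(C1) \subset U1 / V1 by rewrite gacent_astab_chief_factor.
pose fR := restrm_morphism sRU1 (factm_morphism kerR nV1U1).
pose fD := factm_morphism kerD nCG1.
apply: (@isog_sdprod_by _ _ _ _ _ _ _ _ _ _ fR fD).
- apply/injm_restrm/injm_factmP; rewrite ker_coset ker_restrm ker_coset.
  by apply/eqP; rewrite eqEsubset tiU1V2 subsetI sVU1 sV12.
- apply/injm_factmP; rewrite ker_coset ker_restrm ker_coset.
  apply/eqP; rewrite eqEsubset astab_chief_factorI subsetI.
  by rewrite astab_chief_factor_sub astab_chief_factorS.
- rewrite morphim_restrm setIid /= !gacent_astab_chief_factor.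
  rewrite [U1 / V1]/quotient morphim_factm morphim_restrm setIid.
  have -> : U2 :=: U1 * V2 by apply/eqP; rewrite eqEsubset sU2U1V2 mul_subG.
  by rewrite quotientMidr.
- rewrite /= morphim_factm morphim_restrm setIid.
  have -> : G2 :=: G1 * C2.
    by apply/eqP; rewrite eqEsubset chief_factor_mulg_astab mul_subG ?astab_chief_factor_sub.
  by rewrite quotientMidr.
have fRE y : y \in U1 -> fR (coset V1 y) = coset V2 y.
  by move=> Uy; apply: (factmE kerR nV1U1 Uy).
have fDE y : y \in G1 -> fD (coset C1 y) = coset C2 y.
  by move=> Gy; apply: (factmE kerD nCG1 Gy).
move=> x a /(subsetP sRU1)/morphimP[u Nu Uu ->{x}] /morphimP[g _ Gg ->{a}].
have G2g := subsetP sG12 g Gg; have Uug : u ^ g \in U1 by rewrite memJ_norm ?(subsetP nUG1).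
have [N1g N2g] := (subsetP nVG1 g Gg, subsetP nVG2 g G2g).
rewrite modgactE ?subxx //; last by rewrite inE Gg (subsetP nCG1).
rewrite actbyE ?mem_quotient // qactJ N1g -morphJ // !fRE ?fDE //.
rewrite modgactE ?subxx //; last by rewrite inE G2g (subsetP nCG2).
by rewrite actbyE ?mem_quotient ?(subsetP sU12) // qactJ N2g morphJ // (subsetP nV2U1).
Qed.

End FcentralTransfer.

Lemma Fcentral_transfer (F : group_class) (formF : formation F) (gT : finGroupType)
    (G1 V1 U1 G2 V2 U2 : {group gT}) :
    chief_factor G1 V1 U1 -> chief_factor G2 V2 U2 ->
    G1 \subset G2 -> U1 \subset U2 -> V1 \subset V2 ->
    U1 :&: V2 \subset V1 -> U2 \subset U1 * V2 ->
    G2 \subset G1 * 'C(U2 / V2 | 'Q) ->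
  Fcentral F G1 V1 U1 <-> Fcentral F G2 V2 U2.
Proof.
move=> chief1 chief2 sG sU sV tiUV sUUV sGGC.
have isoG := isog_chief_factor_sdprod chief1 chief2 sG sU sV tiUV sUUV sGGC.
split=> FU nU.
  exact: (formation_isog formF (isoG (chief_factor_acts chief1) nU) (FU _)).
apply: (formation_isog formF) (FU (chief_factor_acts chief2)).
by rewrite isog_sym; apply: isoG.
Qed.

Lemma chief_factor_sub_eq (gT : finGroupType) (T K H L : {group gT}) :
    chief_factor T K H -> K \subset L -> L \subset H -> T \subset 'N(L) ->
  L :=: K \/ L :=: H.
Proof.
case/andP=> /maxgroupP[_ maxK] _ sKL sLH nLT.
have [pLH | ] := boolP (L \proper H); first by left; apply: maxK; rewrite ?pLH.
by rewrite properEneq sLH andbT negbK => /eqP; right.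
Qed.

Section ChiefFactorNormal.

Variables (gT : finGroupType) (T K H X : {group gT}).
Hypotheses (chiefH : chief_factor T K H) (nsXT : X <| T).

Lemma chief_factor_mulIg : ~~ (H :&: X \subset K) -> (H :&: X) * K = H.
Proof.
move=> sHXK; have [sKH nKT sHT nHT] := chief_factorP chiefH.
have [_ nXT] := andP nsXT.
have nKHX : H :&: X \subset 'N(K) by rewrite subIset ?(subset_trans sHT nKT).
rewrite -norm_joinEl //.
have sLH : (H :&: X) <*> K \subset H by rewrite join_subG subsetIl sKH.
have [eqK | ->] // := chief_factor_sub_eq chiefH (joing_subr _ _) sLH
  (normsY (normsI nHT nXT) nKT).
by case/negP: sHXK; rewrite -eqK joing_subl.
Qed.

Lemma chief_factorI : ~~ (H :&: X \subset K) -> chief_factor T (K :&: X) (H :&: X).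
Proof.
move=> sHXK; have [sKH nKT sHT nHT] := chief_factorP chiefH.
have [_ nXT] := andP nsXT.
apply/andP; split; last by rewrite normalI //; case/andP: chiefH.
apply/maxgroupP; split.
  rewrite normsI // andbT properEneq setSI // andbT.
  by apply: contra sHXK => /eqP <-; apply: subsetIl.
move=> W /andP[pW nWT] sKXW; have /subsetIP[sWH sWX] := proper_sub pW.
have nKW : W \subset 'N(K) by rewrite (subset_trans sWH) ?(subset_trans sHT).
have sLH : K <*> W \subset H by rewrite join_subG sKH.
have [eqK | eqH] := chief_factor_sub_eq chiefH (joing_subl K W) sLH (normsY nKT nWT).
  by apply/eqP; rewrite eqEsubset sKXW subsetI sWX -eqK joing_subr.
case/negP: (proper_subn pW).
have eHKW : gval H = K * W by rewrite -(norm_joinEr nKW).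
by rewrite eHKW setIC -group_modr // mul_subG // setIC.
Qed.

Lemma chief_factor_joinI : H :&: X \subset K -> H :&: (K <*> X) \subset K.
Proof.
move=> sHXK; have [sKH _ sHT _] := chief_factorP chiefH; have [_ nXT] := andP nsXT.
rewrite norm_joinEl ?(subset_trans sKH) ?(subset_trans sHT) //.
by rewrite setIC -group_modl // mul_subG // setIC.
Qed.

Lemma chief_factorY : H :&: X \subset K -> chief_factor T (K <*> X) (H <*> X).
Proof.
move=> sHXK; have [sKH nKT sHT nHT] := chief_factorP chiefH.
have [_ nXT] := andP nsXT.
have tiHKX := chief_factor_joinI sHXK.
apply/andP; split; last by rewrite normalY //; case/andP: chiefH.
apply/maxgroupP; split.
  rewrite normsY // andbT properEneq genS ?setSU // andbT.
  have pKH : K \proper H by case/andP: chiefH => /maxnormal_proper.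
  apply: contraL (proper_subn pKH) => /eqP eqKHX; rewrite negbK (subset_trans _ tiHKX) //.
  by rewrite subsetI subxx eqKHX joing_subl.
move=> W /andP[pW nWT] sKXW; have sWHX := proper_sub pW.
have /joing_subP[sKW sXW] := sKXW.
have sKWH : K \subset W :&: H by rewrite subsetI sKW sKH.
have [eqK | eqH] := chief_factor_sub_eq chiefH sKWH (subsetIr W H) (normsI nWT nHT).
  apply/eqP; rewrite eqEsubset sKXW andbT.
  rewrite -(setIidPl sWHX) norm_joinEl ?(subset_trans sHT) //.
  by rewrite -group_modr // eqK -norm_joinEl ?(subset_trans (subset_trans sKH sHT)).
case/negP: (proper_subn pW); rewrite join_subG sXW andbT.
by rewrite -eqH subsetIl.
Qed.

Variables (F : group_class) (formF : formation F).

Lemma Fcentral_chief_factorI :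
  ~~ (H :&: X \subset K) -> Fcentral F T (K :&: X) (H :&: X) <-> Fcentral F T K H.
Proof.
move=> sHXK; apply: Fcentral_transfer (chief_factorI sHXK) chiefH _ _ _ _ _ _ => //.
- exact: subsetIl.
- exact: subsetIl.
- by apply/subsetP=> x /[!inE] /andP[/andP[_ ->] ->].
- by rewrite chief_factor_mulIg.
- exact: mulG_subl.
Qed.

Lemma Fcentral_chief_factorY :
  H :&: X \subset K -> Fcentral F T K H <-> Fcentral F T (K <*> X) (H <*> X).
Proof.
move=> sHXK; apply: Fcentral_transfer chiefH (chief_factorY sHXK) _ _ _ _ _ _ => //.
- exact: joing_subl.
- exact: joing_subl.
- exact: chief_factor_joinI.
- have [_ _ sHT _] := chief_factorP chiefH; have [_ nXT] := andP nsXT.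
  change (H <*> X \subset H * (K <*> X)).
  by rewrite norm_joinEl ?(subset_trans sHT) // mulgS // joing_subr.
- exact: mulG_subl.
Qed.

End ChiefFactorNormal.

Lemma Fhyper_subY (F : group_class) (formF : formation F) (gT : finGroupType)
    (T N1 N2 : {group gT}) :
  Fhyper_sub F T N1 -> Fhyper_sub F T N2 -> Fhyper_sub F T (N1 <*> N2)%G.
Proof.
move=> [nsN1 hypN1] [nsN2 hypN2]; split=> [|U V chiefU sUN]; first exact: normalY.
have [sUN1V | nsUN1V] := boolP (U :&: N1 \subset V); last first.
  apply/(Fcentral_chief_factorI chiefU nsN1 formF nsUN1V)/hypN1.
    exact: chief_factorI.
  exact: subsetIr.
have chiefUN1 := chief_factorY chiefU nsN1 sUN1V.
have nsUN2 : ~~ ((U <*> N1)%G :&: N2 \subset (V <*> N1)%G).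
  have pUN1 : V <*> N1 \proper U <*> N1 by case/andP: chiefUN1 => /maxnormal_proper.
  apply: contra (proper_subn pUN1) => sUN2.
  have [sN1T _] := andP nsN1; have [_ nN2T] := andP nsN2.
  have sUN12 : U <*> N1 \subset N1 * N2.
    by rewrite -norm_joinEl ?(subset_trans sN1T) // join_subG sUN joing_subl.
  rewrite -(setIidPl sUN12) setIC -group_modl ?joing_subr //.
  by rewrite mul_subG ?joing_subr // setIC.
apply/(Fcentral_chief_factorY chiefU nsN1 formF sUN1V).
apply/(Fcentral_chief_factorI chiefUN1 nsN2 formF nsUN2)/hypN2.
  exact: chief_factorI.
exact: subsetIr.
Qed.

Lemma pboolP (Q : Prop) : reflect Q (pbool Q).
Proof. by rewrite /pbool; case: excluded_middle_informative; constructor. Qed.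

Lemma Fhyper_sub_ZF (F : group_class) (gT : finGroupType) (G N : {group gT}) :
  Fhyper_sub F G N -> N \subset ZF F G.
Proof.
move/pboolP=> hypN.
have := @bigcup_sup _ _ N (fun N : {group gT} => pbool (Fhyper_sub F G N)) (@gval _) hypN.
by move/subset_trans; apply; apply: sub_gen.
Qed.

Lemma ZF_Fhyper_sub (F : group_class) (formF : formation F) (gT : finGroupType)
    (T : {group gT}) :
  exists2 M : {group gT}, Fhyper_sub F T M & ZF F T = M.
Proof.
pose hyp N := pbool (Fhyper_sub F T N).
have hyp1 : hyp 1%G.
  apply/pboolP; split=> [|U V /andP[/maxnormal_proper pVU _] sU1]; first exact: normal1.
  by have := proper_card (proper_sub_trans pVU sU1); rewrite cards1 ltnS leqNgt cardG_gt0.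
have [M /pboolP hypM maxM] := arg_maxnP (fun N : {group gT} => #|N|) hyp1.
exists M => //; apply/eqP; rewrite eqEsubset Fhyper_sub_ZF // andbT gen_subG.
apply/bigcupsP=> N /pboolP hypN.
have /maxM leMNM : hyp (N <*> M)%G by apply/pboolP; apply: Fhyper_subY.
have /eqP -> : M :==: N <*> M by rewrite eqEcard joing_subr.
exact: joing_subl.
Qed.

Lemma chief_factor_commg_sub (gT : finGroupType) (G V U P : {group gT}) :
  nilpotent P -> P <| G -> chief_factor G V U -> U \subset P -> [~: U, P] \subset V.
Proof.
move=> nilP /andP[sPG nPG] chiefU sUP; have [sVU nVG sUG nUG] := chief_factorP chiefU.
have [nVU nVP] := (subset_trans sUG nVG, subset_trans sPG nVG).
have sRU : [~: U, P] \subset U by rewrite commg_subl (subset_trans sPG).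
have sLU : [~: U, P] <*> V \subset U by rewrite join_subG sRU.
have nLG : G \subset 'N([~: U, P] <*> V) by rewrite normsY // normsR.
have [eqV | eqU] := chief_factor_sub_eq chiefU (joing_subr _ _) sLU nLG.
  by rewrite -eqV joing_subl.
have {}eqU : [~: U, P] <*> V = U := eqU.
have ntUV : U / V != 1.
  by rewrite quotient_neq1 ?(maxnormal_proper (proj1 (andP chiefU))) // /normal sVU.
have /nil_comm_properl : nilpotent (P / V) := quotient_nil V nilP.
move/(_ _ (P / V) (quotientS V sUP) ntUV).
rewrite subsetI subxx quotient_norms ?(subset_trans sPG) // => /(_ isT).
have -> : [~: U / V, P / V] = U / V.
  by rewrite -quotientR // -[in RHS]eqU quotientYidr ?(subset_trans sRU).
by rewrite /= properxx.
Qed.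

Section Supplement.

Variables (gT : finGroupType) (G P T V U : {group gT}).
Hypotheses (nsPG : P <| G) (sTG : T \subset G) (defG : P * T = G).
Hypotheses (chiefU : chief_factor G V U) (sUT : U \subset T) (sUPV : [~: U, P] \subset V).

Lemma chief_factor_supplement : chief_factor T V U.
Proof.
have [_ nVG _ nUG] := chief_factorP chiefU.
have [_ maxV] := maxgroupP (proj1 (andP chiefU)).
apply/andP; split; last by rewrite /normal sUT (subset_trans sTG).
apply/maxgroupP; split=> [|W /andP[pWU nWT] sVW].
  by rewrite (subset_trans sTG) // andbT (maxnormal_proper (proj1 (andP chiefU))).
apply: maxV => //; rewrite pWU /= -defG mul_subG // -commg_subl.
by rewrite (subset_trans _ sVW) // (subset_trans _ sUPV) // commSg // proper_sub.
Qed.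

Lemma Fcentral_supplement (F : group_class) :
  formation F -> Fcentral F T V U <-> Fcentral F G V U.
Proof.
move=> formF; have [sPG nPG] := andP nsPG; have [_ nVG sUG _] := chief_factorP chiefU.
apply: Fcentral_transfer chief_factor_supplement chiefU _ _ _ _ _ _ => //.
- exact: subsetIr.
- exact: mulG_subl.
rewrite -defG -(normC (subset_trans sTG nPG)) mulgS // sub_astabQR.
- by rewrite commGC.
- exact: subset_trans nVG.
exact: subset_trans sUG nVG.
Qed.

End Supplement.

Theorem lemma3p3 (F : group_class) (hF : saturated_formation F)
  (gT : finGroupType) (p : nat) (G P T : {group gT}) :
  prime p -> p.-group P -> P <| G -> T \subset G -> P * T = G ->
  P :&: ZF F T <| P ->
  P :&: ZF F T \subset ZF F G.
Proof.
move=> _ pP nsPG sTG defG; have formF := hF.1.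
have [M [nsMT hypM] ->] := ZF_Fhyper_sub formF T; have [sMT nMT] := andP nsMT.
move=> /andP[_ nPMP]; apply: (@Fhyper_sub_ZF _ _ _ (P :&: M)%G); split.
  have [sPG nPG] := andP nsPG.
  by rewrite /normal subIset ?sPG // -defG mul_subG //= normsI ?(subset_trans sTG nPG).
move=> U V chiefU /subsetIP[sUP sUM]; have sUT := subset_trans sUM sMT.
have sUPV := chief_factor_commg_sub (pgroup_nil pP) nsPG chiefU sUP.
apply/(Fcentral_supplement nsPG sTG defG chiefU sUT sUPV formF).
exact: hypM _ _ (chief_factor_supplement sTG defG chiefU sUT sUPV) sUM.
Qed.
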